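(* Let $m=1$ (so $Y=W_2\times W_3$). For $h\in\mathbb{R}[T]$, the real circle form $\mu_h=\varphi_h\circ\mu_0$ is equivalent to $\mu_0$ if and only if $h(0)=0$. In particular, $\mu_0$ and $\mu_1$ (the form for the constant polynomial $h=1$) are inequivalent, and the forms $\mu_h$, $h\in\mathbb{R}[T]$, fall into exactly two equivalence classes.
   Context: For $k\ge1$, $W_k=\mathbb{C}^2$ is the $\mathbb{C}^*$-module with weights $(k,-k)$: $t\cdot(x,y)=(t^kx,t^{-k}y)$. Here $n=3$ and $Y=W_2\times W_3$ with coordinates $(a,b,x,y)$, $t\cdot(a,b,x,y)=(t^2a,t^{-2}b,t^3x,t^{-3}y)$. Let $\sigma(t)=\overline{t}^{-1}$ on $\mathbb{C}^*$. A real circle form on $Y$ is an antiholomorphic involution $\mu$ of $Y$ with $\mu(t\cdot p)=\sigma(t)\cdot\mu(p)$; two such forms $\mu_1,\mu_2$ are equivalent if $\mu_2=\psi\circ\mu_1\circ\psi^{-1}$ for some regular $\mathbb{C}^*$-equivariant automorphism $\psi$ of $Y$. Let $\mu_0(a,b,x,y)=(\overline{b},\overline{a},\overline{y},\overline{x})$, $T=ab$, and for $h\in\mathbb{R}[T]$ let $M_h=\begin{pmatrix}1-Th^2 & a^nh^n\\ -b^nh^n & \sum_{j=0}^{n-1}(Th^2)^j\end{pmatrix}$ (with $h=h(ab)$), $\varphi_h(a,b,x,y)=(a,b,M_h\binom{x}{y})$, and $\mu_h=\varphi_h\circ\mu_0$. *)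

From HB Require Import structures.
From mathcomp Require Import all_boot all_order all_algebra.
Set Implicit Arguments. Unset Strict Implicit. Unset Printing Implicit Defensive.
Import Order.TTheory GRing.Theory Num.Theory.
Local Open Scope ring_scope.

(* Complex numbers are modelled by an arbitrary numClosedFieldType C
   (algebraically closed field with complex conjugation Num.conj); the
   statement is claimed for every such C, in particular for C itself. *)

(* Points of Y = W_2 x W_3 = C^4, coordinates (a,b,x,y). *)
Definition pt (C : numClosedFieldType) := (C * C * C * C)%type.

Section Defs.
Variable C : numClosedFieldType.

Definition ca (p : pt C) : C := p.1.1.1.
Definition cb (p : pt C) : C := p.1.1.2.
Definition cx (p : pt C) : C := p.1.2.
Definition cy (p : pt C) : C := p.2.

Definition act (t : C) (p : pt C) : pt C :=
  (t ^+ 2 * ca p, t ^- 2 * cb p, t ^+ 3 * cx p, t ^- 3 * cy p).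

Definition sigma (t : C) : C := (Num.conj t)^-1.

Inductive polyfun : (pt C -> C) -> Prop :=
| PF_const (c : C) : polyfun (fun _ => c)
| PF_a : polyfun ca
| PF_b : polyfun cb
| PF_x : polyfun cx
| PF_y : polyfun cy
| PF_add f g : polyfun f -> polyfun g -> polyfun (fun p => f p + g p)
| PF_mul f g : polyfun f -> polyfun g -> polyfun (fun p => f p * g p).

Definition regular_map (f : pt C -> pt C) : Prop :=
  [/\ polyfun (fun p => ca (f p)), polyfun (fun p => cb (f p)),
      polyfun (fun p => cx (f p)) & polyfun (fun p => cy (f p))].

Definition equivariant (f : pt C -> pt C) : Prop :=
  forall t, t != 0 -> forall p, f (act t p) = act t (f p).

(* Real circle form: antiholomorphic (= complex conjugation composed with a
   regular map) involution, sigma-equivariant. (Recorded for context.) *)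
Definition real_circle_form (mu : pt C -> pt C) : Prop :=
  [/\ (exists g, regular_map g /\
        forall p, mu p = (Num.conj (ca (g p)), Num.conj (cb (g p)),
                          Num.conj (cx (g p)), Num.conj (cy (g p)))),
      (forall p, mu (mu p) = p) &
      (forall t, t != 0 -> forall p, mu (act t p) = act (sigma t) (mu p))].

Definition equiv_forms (mu1 mu2 : pt C -> pt C) : Prop :=
  exists psi psi' : pt C -> pt C,
    [/\ regular_map psi /\ regular_map psi', cancel psi psi', cancel psi' psi,
        equivariant psi & (forall p, mu2 p = psi (mu1 (psi' p)))].

Definition mu0 (p : pt C) : pt C :=
  (Num.conj (cb p), Num.conj (ca p), Num.conj (cy p), Num.conj (cx p)).

Definition nW : nat := 3.

Definition phi (h : {poly C}) (p : pt C) : pt C :=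
  let a := ca p in let b := cb p in let T := a * b in let s := h.[T] in
  (a, b,
   (1 - T * s ^+ 2) * cx p + a ^+ nW * s ^+ nW * cy p,
   - (b ^+ nW * s ^+ nW) * cx p + (\sum_(j < nW) (T * s ^+ 2) ^+ j) * cy p).

Definition mu (h : {poly C}) (p : pt C) : pt C := phi h (mu0 p).

Definition real_poly (h : {poly C}) : Prop := h \is a polyOver Num.real.

End Defs.

From HB Require Import structures.
From mathcomp Require Import all_boot all_order all_algebra.
From mathcomp Require Import ring zify.
From Stdlib Require Import FunctionalExtensionality.
Set Implicit Arguments. Unset Strict Implicit. Unset Printing Implicit Defensive.
Import Order.TTheory GRing.Theory Num.Theory.
Local Open Scope ring_scope.

(* Let psi be a regular C^*-equivariant automorphism with psi o mu0 = mu_c o psi,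
   c real and nonzero (every mu_h is equivalent to such a mu_c, see below).
   Equivariance makes psi act on the plane {x = y = 0} by (a, b) |-> (lam a, lam' b),
   and its derivative in the (x, y)-directions at (1, T, 0, 0) is a matrix of
   polynomials alpha, beta, gamma, delta in T whose determinant d is a nonzero
   constant, the inverse of psi providing an inverse matrix. Equivariance compares
   these entries with those at (T, 1, 0, 0), and differentiating
   psi o mu0 = mu_c o psi along a real line expresses the latter through
   conj delta and conj beta. Eliminating, one gets
     (1 - r T) d = alpha' conj(alpha') - T^3 beta conj(beta),  r = c^2 lam conj(lam),
   impossible since the first product has odd size and the second one even size,
   at least 4. Conversely, fibrewise shears conjugate mu_h to mu_(h + T k) and a
   real rescaling of (a, b) rescales a constant h, so mu_h is equivalent to
   mu_(h(0)), and all h(0) != 0 give a single class. *)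

Section PolyFacts.
Variable R : numDomainType.
Implicit Types p q : {poly R}.

Lemma eq_poly_natr p q : (forall n : nat, p.[n.+1%:R] = q.[n.+1%:R]) -> p = q.
Proof.
move=> eq_pq; apply/eqP; rewrite -subr_eq0; apply/eqP.
apply: (@roots_geq_poly_eq0 _ _ [seq i.+1%:R | i <- iota 0 (size (p - q))]).
- by apply/allP => _ /mapP [i _ ->]; rewrite /root hornerD hornerN eq_pq subrr.
- by rewrite map_inj_uniq ?iota_uniq // => i j /eqP; rewrite eqr_nat => /eqP [].
- by rewrite size_map size_iota.
Qed.

Lemma eq_poly_neq0 p q : (forall x, x != 0 -> p.[x] = q.[x]) -> p = q.
Proof. by move=> eq_pq; apply: eq_poly_natr => n; rewrite eq_pq ?pnatr_eq0. Qed.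

Lemma eq_poly_horner p q : (forall x, p.[x] = q.[x]) -> p = q.
Proof. by move=> eq_pq; apply: eq_poly_neq0 => x _. Qed.

Lemma horner0_eq0 p q k :
  (forall x, x != 0 -> p.[x] = x * q.[x * k]) -> p.[0] = 0.
Proof.
move=> eq_pq; rewrite (@eq_poly_neq0 p ('X * (q \Po ('X * k%:P)))) ?hornerM ?hornerX ?mul0r //.
by move=> x x0; rewrite eq_pq // hornerM horner_comp hornerX hornerM hornerX hornerC.
Qed.

End PolyFacts.

Lemma mul_poly_eq1 (R : idomainType) (p q : {poly R}) :
  p * q = 1 -> p = (p`_0)%:P /\ p`_0 != 0.
Proof.
move=> pq1; have /andP [/eqP size_p unit_p0] : p \is a GRing.unit.
  by apply/unitrPr; exists q.
by split; [rewrite [LHS]size1_polyC ?size_p | apply: contraTneq unit_p0 => ->; rewrite unitr0].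
Qed.

Section ConjPoly.
Variable C : numClosedFieldType.
Implicit Types p q : {poly C}.

Definition conjp p := map_poly Num.conj p.

Lemma size_conjp p : size (conjp p) = size p.
Proof. exact: size_map_poly. Qed.

Lemma size_norm_poly p : size (p * conjp p) = (size p).*2.-1.
Proof.
have [->|p0] := eqVneq p 0; first by rewrite mul0r size_poly0.
rewrite size_mul ?size_conjp -?size_poly_eq0 ?size_conjp ?size_poly_eq0 //.
move: p0; rewrite -size_poly_eq0; case: (size p) => // n _; rewrite -addnn; lia.
Qed.

Lemma size_norm_poly_sub_X3 p q : size (p * conjp p - 'X^3 * (q * conjp q)) != 2%N.
Proof.
have [->|p0] := eqVneq p 0.
  have [->|q0] := eqVneq q 0; first by rewrite !(mul0r, mulr0) subr0 size_poly0.
  rewrite mul0r sub0r size_polyN mulrC size_mulXn ?size_norm_poly -?size_poly_eq0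
    ?size_norm_poly; rewrite -size_poly_eq0 in q0; rewrite -?subn1 -?addnn; lia.
have size_u : size (p * conjp p) = ((size p).*2.-1)%N := size_norm_poly p.
rewrite -size_poly_eq0 -subn1 -addnn in p0 size_u.
have [->|q0] := eqVneq q 0; first by rewrite !(mul0r, mulr0) subr0 size_u; lia.
have size_v : size ('X^3 * (q * conjp q)) = ((size q).*2 + 2)%N.
  rewrite mulrC size_mulXn ?size_norm_poly -?size_poly_eq0 ?size_norm_poly;
    rewrite -size_poly_eq0 in q0; rewrite -?subn1 -?addnn; lia.
rewrite -size_poly_eq0 in q0; rewrite -addnn in size_v.
have [lt_uv|lt_vu|] := ltngtP (size (p * conjp p)) (size ('X^3 * (q * conjp q))).
- by rewrite addrC size_polyDl ?size_polyN // size_v; lia.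
- by rewrite size_polyDl ?size_polyN // size_u; lia.
- by rewrite size_u size_v; lia.
Qed.

End ConjPoly.

(* Polynomial functions on Y are handled through their syntax, which can be
   evaluated in any commutative ring (in particular along polynomial curves)
   and differentiated formally. *)
Inductive pexpr (K : Type) :=
| EC of K | EA | EB | EX | EY
| EAdd of pexpr K & pexpr K | EMul of pexpr K & pexpr K.
Arguments EA {K}. Arguments EB {K}. Arguments EX {K}. Arguments EY {K}.

Definition map4 (A B : Type) (f : A -> B) (q : A * A * A * A) : B * B * B * B :=
  (f q.1.1.1, f q.1.1.2, f q.1.2, f q.2).

Section Eval.
Variables (K : Type) (R : comNzRingType) (emb : K -> R).

Fixpoint peval (q : R * R * R * R) (e : pexpr K) : R :=
  match e with
  | EC k => emb k | EA => q.1.1.1 | EB => q.1.1.2 | EX => q.1.2 | EY => q.2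
  | EAdd e1 e2 => peval q e1 + peval q e2
  | EMul e1 e2 => peval q e1 * peval q e2
  end.

Fixpoint pderiv (q dq : R * R * R * R) (e : pexpr K) : R :=
  match e with
  | EC _ => 0 | EA => dq.1.1.1 | EB => dq.1.1.2 | EX => dq.1.2 | EY => dq.2
  | EAdd e1 e2 => pderiv q dq e1 + pderiv q dq e2
  | EMul e1 e2 => peval q e1 * pderiv q dq e2 + pderiv q dq e1 * peval q e2
  end.

Lemma pderivXY q x y e :
  pderiv q (0, 0, x, y) e = x * pderiv q (0, 0, 1, 0) e + y * pderiv q (0, 0, 0, 1) e.
Proof.
elim: e => /= [_| | | | |e1 -> e2 ->|e1 -> e2 ->]; ring.
Qed.

End Eval.

Lemma peval_rmorph (K : Type) (R S : comNzRingType) (f : {rmorphism R -> S})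
    (emb : K -> R) q e :
  f (peval emb q e) = peval (f \o emb) (map4 f q) e.
Proof. by elim: e => //= e1 IH1 e2 IH2; rewrite ?rmorphD ?rmorphM IH1 IH2. Qed.

Lemma pderiv_rmorph (K : Type) (R S : comNzRingType) (f : {rmorphism R -> S})
    (emb : K -> R) q dq e :
  f (pderiv emb q dq e) = pderiv (f \o emb) (map4 f q) (map4 f dq) e.
Proof.
elim: e => //= [_|e1 IH1 e2 IH2|e1 IH1 e2 IH2]; first exact: rmorph0.
  by rewrite rmorphD IH1 IH2.
by rewrite rmorphD !rmorphM IH1 IH2 !peval_rmorph.
Qed.

Lemma eq_peval (K : Type) (R : comNzRingType) (emb emb' : K -> R) q e :
  emb =1 emb' -> peval emb q e = peval emb' q e.
Proof. by move=> eq_emb; elim: e => //= e1 -> e2 ->. Qed.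

Lemma eq_pderiv (K : Type) (R : comNzRingType) (emb emb' : K -> R) q dq e :
  emb =1 emb' -> pderiv emb q dq e = pderiv emb' q dq e.
Proof.
by move=> eq_emb; elim: e => //= e1 -> e2 ->; rewrite ?(eq_peval _ _ eq_emb).
Qed.

Section Curves.
Variable R : comNzRingType.
Implicit Types (e : pexpr R) (g : {poly R} * {poly R} * {poly R} * {poly R}).

Lemma coef1_mul (p q : {poly R}) : q`_0 = 0 -> (p * q)`_1 = p`_0 * q`_1.
Proof. by move=> q0; rewrite coefM !big_ord_recl big_ord0 /= subn0 subnn q0 mulr0 !addr0. Qed.

(* Evaluating along a polynomial curve g, the coefficient of degree 1 only
   depends on g`_0 and g`_1: this is the chain rule. *)
Lemma coef_peval_curve g e :
  (peval polyC g e)`_0 = peval id (map4 (coefp 0) g) e /\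
  (peval polyC g e)`_1 = pderiv id (map4 (coefp 0) g) (map4 (coefp 1) g) e.
Proof.
elim: e => /= [k| | | | |e1 [IH0 IH1] e2 [JH0 JH1]|e1 [IH0 IH1] e2 [JH0 JH1]] //.
- by rewrite !coefC.
- by rewrite !coefD IH0 IH1 JH0 JH1.
- rewrite coef0M IH0 JH0 coefM !big_ord_recl big_ord0 /= IH0 IH1 JH0 JH1.
  by split => //; rewrite addr0 addrC.
Qed.

Lemma horner_peval g e z :
  (peval polyC g e).[z] = peval id (map4 (horner^~ z) g) e.
Proof.
rewrite -horner_evalE peval_rmorph; apply: eq_peval => k /=.
by rewrite horner_evalE hornerC.
Qed.

Lemma horner_pderiv g dg e z :
  (pderiv polyC g dg e).[z] = pderiv id (map4 (horner^~ z) g) (map4 (horner^~ z) dg) e.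
Proof.
rewrite -horner_evalE pderiv_rmorph; apply: eq_pderiv => k /=.
by rewrite horner_evalE hornerC.
Qed.

End Curves.

Definition pexpr_map (K : Type) := (pexpr K * pexpr K * pexpr K * pexpr K)%type.

Local Notation ev e p := (peval id p e).
Local Notation dv e p v := (pderiv id p v e).

Section PointsOfY.
Variable C : numClosedFieldType.
Implicit Types (p q v : pt C) (e : pexpr C) (F : pexpr_map C).

Definition evmap F p : pt C := map4 (fun e => ev e p) F.
Definition Dmap F p v : pt C := map4 (fun e => dv e p v) F.

Definition line p v (z : C) : pt C :=
  (ca p + z * ca v, cb p + z * cb v, cx p + z * cx v, cy p + z * cy v).

Definition line_poly e p v : {poly C} :=
  peval polyC ((ca p)%:P + (ca v)%:P * 'X, (cb p)%:P + (cb v)%:P * 'X,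
               (cx p)%:P + (cx v)%:P * 'X, (cy p)%:P + (cy v)%:P * 'X) e.

Lemma horner_line_poly e p v z : (line_poly e p v).[z] = ev e (line p v z).
Proof. by rewrite horner_peval /map4 /line /= !hornerE !(mulrC z). Qed.

Lemma coef_line_poly e p v :
  (line_poly e p v)`_0 = ev e p /\ (line_poly e p v)`_1 = dv e p v.
Proof.
have [-> ->] := coef_peval_curve
  ((ca p)%:P + (ca v)%:P * 'X, (cb p)%:P + (cb v)%:P * 'X,
   (cx p)%:P + (cx v)%:P * 'X, (cy p)%:P + (cy v)%:P * 'X) e.
case: p v => [[[a b] x] y] [[[da db] dx] dy].
by rewrite /map4 /= !coefD !coefC !coefCM !coefX /= !mulr0 !mulr1 !addr0 !add0r.
Qed.

(* Only real parameters are required, as needed when the line is conjugated. *)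
Lemma dv_natr e p v (P : {poly C}) :
  (forall n : nat, ev e (line p v n.+1%:R) = P.[n.+1%:R]) -> dv e p v = P`_1.
Proof.
move=> eq_P; have [_ <-] := coef_line_poly e p v.
by rewrite (@eq_poly_natr _ (line_poly e p v) P) // => n; rewrite horner_line_poly.
Qed.

Lemma dv_comp F e e' p v :
  (forall q, ev e (evmap F q) = ev e' q) -> dv e (evmap F p) (Dmap F p v) = dv e' p v.
Proof.
move=> eq_e; set g := map4 (fun f => line_poly f p v) F.
have [_] := coef_peval_curve g e; rewrite /g /map4 /=.
rewrite !(proj1 (coef_line_poly _ _ _)) !(proj2 (coef_line_poly _ _ _)) => <-.
apply: esym; apply: dv_natr => n.
by rewrite horner_peval /map4 /= !horner_line_poly -eq_e.
Qed.

Definition dv_poly e (g : {poly C} * {poly C} * {poly C} * {poly C}) v : {poly C} :=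
  pderiv polyC g (map4 polyC v) e.

Lemma horner_dv_poly e g v z : (dv_poly e g v).[z] = dv e (map4 (horner^~ z) g) v.
Proof.
by rewrite /dv_poly horner_pderiv; case: v => [[[? ?] ?] ?]; rewrite /map4 /= !hornerC.
Qed.

Lemma conj_line_poly e p v :
  [/\ (conjp (line_poly e p v)).[0] = (ev e p)^*,
      (conjp (line_poly e p v))`_1 = (dv e p v)^* &
      forall n : nat, (conjp (line_poly e p v)).[n%:R] = (ev e (line p v n%:R))^*].
Proof.
have [c0 c1] := coef_line_poly e p v.
split=> [|| n]; first by rewrite horner_coef0 coef_map c0.
  by rewrite coef_map c1.
by rewrite -{1}(rmorph_nat Num.conj n) horner_map horner_line_poly.
Qed.

End PointsOfY.

Section PolyFun.
Variable C : numClosedFieldType.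
Implicit Types f g : pt C -> C.

Lemma polyfun_pexpr f : polyfun f -> exists e : pexpr C, forall p, f p = ev e p.
Proof.
elim=> [k| | | | |f1 g1 _ [e1 H1] _ [e2 H2]|f1 g1 _ [e1 H1] _ [e2 H2]].
- by exists (EC k).
- by exists EA.
- by exists EB.
- by exists EX.
- by exists EY.
- by exists (EAdd e1 e2) => p; rewrite H1 H2.
- by exists (EMul e1 e2) => p; rewrite H1 H2.
Qed.

Lemma regular_evmap (m : pt C -> pt C) : regular_map m -> exists F : pexpr_map C, m = evmap F.
Proof.
case=> /polyfun_pexpr [eA hA] /polyfun_pexpr [eB hB] /polyfun_pexpr [eX hX]
  /polyfun_pexpr [eY hY].
exists (eA, eB, eX, eY); apply: functional_extensionality => p.
by rewrite /evmap /map4 /= -hA -hB -hX -hY; case: (m p) => [[[]]].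
Qed.

Lemma eq_polyfun f g : polyfun f -> f =1 g -> polyfun g.
Proof. by move=> pf /functional_extensionality <-. Qed.

Lemma polyfunN f : polyfun f -> polyfun (fun p => - f p).
Proof. by move=> pf; apply: (eq_polyfun (PF_mul (PF_const (-1)) pf)) => p; rewrite mulN1r. Qed.

Lemma polyfunB f g : polyfun f -> polyfun g -> polyfun (fun p => f p - g p).
Proof. by move=> pf pg; apply: PF_add pf (polyfunN pg). Qed.

Lemma polyfunX f n : polyfun f -> polyfun (fun p => f p ^+ n).
Proof.
move=> pf; elim: n => [|n IH]; first by apply: (eq_polyfun (PF_const 1)) => p.
by apply: (eq_polyfun (PF_mul pf IH)) => p; rewrite exprS.
Qed.

Lemma polyfun_horner_ab (h : {poly C}) : polyfun (fun p => h.[ca p * cb p]).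
Proof.
elim/poly_ind: h => [|h k IH]; first by apply: (eq_polyfun (PF_const 0)) => p; rewrite horner0.
apply: (eq_polyfun (PF_add (PF_mul IH (PF_mul (PF_a C) (PF_b C))) (PF_const k))) => p.
by rewrite hornerMXaddC.
Qed.

Lemma polyfun_comp f (m : pt C -> pt C) :
  polyfun f -> regular_map m -> polyfun (fun p => f (m p)).
Proof. by move=> pf [ma mb mx my]; elim: pf => // *; constructor. Qed.

Lemma regular_comp (m m' : pt C -> pt C) : regular_map m -> regular_map m' ->
  regular_map (fun p => m (m' p)).
Proof.
move=> [ma mb mx my] rm'; split; [exact: (polyfun_comp ma rm') | exact: (polyfun_comp mb rm')
  | exact: (polyfun_comp mx rm') | exact: (polyfun_comp my rm')].
Qed.

End PolyFun.

Lemma self_opp_eq0 (R : numDomainType) (z : R) : z = - z -> z = 0.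
Proof. by move=> zN; apply/eqP; rewrite -[_ == 0](mulrn_eq0 z 2) mulr2n {1}zN addNr. Qed.

Section Action.
Variable C : numClosedFieldType.
Implicit Types (a b x y t z : C) (p v : pt C).

Lemma act_opp1 a b x y : act (-1) (a, b, x, y) = (a, b, - x, - y).
Proof.
rewrite /act /ca /cb /cx /cy /= sqrrN expr1n invr1 !mul1r.
by rewrite exprS sqrrN expr1n mulr1 invrN invr1 !mulN1r.
Qed.

Lemma act_base_a a b : a != 0 ->
  exists t, [/\ t != 0, t ^+ 2 = a & act t (1, a * b, 0, 0) = (a, b, 0, 0)].
Proof.
move=> a0; exists (sqrtC a); rewrite sqrtC_eq0 sqrtCK.
by split=> //; rewrite /act /ca /cb /cx /cy /= sqrtCK mulr1 !mulr0 mulKf.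
Qed.

Lemma act_base_b a b : b != 0 ->
  exists t, [/\ t != 0, t ^- 2 = b & act t (a * b, 1, 0, 0) = (a, b, 0, 0)].
Proof.
move=> b0; exists (sqrtC b)^-1; rewrite invr_eq0 sqrtC_eq0 exprVn invrK sqrtCK.
split=> //; rewrite /act /ca /cb /cx /cy /= !exprVn invrK sqrtCK.
by rewrite mulr1 !mulr0 (mulrC a) mulKf.
Qed.

Lemma line_act t p v z : line (act t p) (act t v) z = act t (line p v z).
Proof. by rewrite /line /act /ca /cb /cx /cy /=; congr (_, _, _, _); ring. Qed.

Lemma equivariant_inverse (f g : pt C -> pt C) :
  cancel f g -> cancel g f -> equivariant f -> equivariant g.
Proof. by move=> fK gK f_eq t t0 p; rewrite -{1}(gK p) -f_eq // fK. Qed.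

Lemma dv_scale (e e' : pexpr C) p v p' v' k :
  (forall z, ev e (line p' v' z) = k * ev e' (line p v z)) -> dv e p' v' = k * dv e' p v.
Proof.
move=> eq_e; rewrite -(proj2 (coef_line_poly e' p v)) -coefCM.
by apply: dv_natr => n; rewrite eq_e hornerCM horner_line_poly.
Qed.

End Action.

Section EquivariantMap.
Variable C : numClosedFieldType.
Variable F : pexpr_map C.
Hypothesis F_equi : equivariant (evmap F).
Implicit Types (a b x y t z : C) (p v : pt C).

(* [base_a.[T]] is the a-coordinate of F (1, T, 0, 0), and [base_b.[T]] the
   b-coordinate of F (T, 1, 0, 0). *)
Definition base_a : {poly C} := line_poly F.1.1.1 (1, 0, 0, 0) (0, 1, 0, 0).
Definition base_b : {poly C} := line_poly F.1.1.2 (0, 1, 0, 0) (1, 0, 0, 0).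

Lemma evmap_act t p : t != 0 ->
  [/\ ev F.1.1.1 (act t p) = t ^+ 2 * ev F.1.1.1 p,
      ev F.1.1.2 (act t p) = t ^- 2 * ev F.1.1.2 p,
      ev F.1.2 (act t p) = t ^+ 3 * ev F.1.2 p & ev F.2 (act t p) = t ^- 3 * ev F.2 p].
Proof. by move=> t0; have := F_equi t0 p; rewrite /evmap /map4 /act /= => -[]. Qed.

Lemma evmap_base_xy a b : ev F.1.2 (a, b, 0, 0) = 0 /\ ev F.2 (a, b, 0, 0) = 0.
Proof.
have N1 : (-1 : C) != 0 by rewrite oppr_eq0 oner_eq0.
have [_ _] := evmap_act (a, b, 0, 0) N1.
rewrite act_opp1 oppr0 exprS sqrrN expr1n mulr1 invrN invr1 !mulN1r.
by move=> /self_opp_eq0 -> /self_opp_eq0 ->.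
Qed.

Lemma evmap_base_a a b : ev F.1.1.1 (a, b, 0, 0) = a * base_a.[a * b].
Proof.
have base_neq0 a' : a' != 0 -> ev F.1.1.1 (a', b, 0, 0) = a' * base_a.[a' * b].
  move=> a'0; have [t [t0 t2 <-]] := act_base_a b a'0.
  have [-> _ _ _] := evmap_act (1, a' * b, 0, 0) t0.
  by rewrite t2 horner_line_poly /line /ca /cb /cx /cy /= !(mulr0, mulr1, addr0, add0r).
(* For a = 0 there is no t with t ^+ 2 = a: conclude by continuity in a. *)
have [->|/base_neq0 //] := eqVneq a 0; rewrite mul0r.
set P := line_poly F.1.1.1 (0, b, 0, 0) (1, 0, 0, 0).
have P_val z : P.[z] = ev F.1.1.1 (z, b, 0, 0).
  by rewrite horner_line_poly /line /ca /cb /cx /cy /= !(mulr0, mulr1, addr0, add0r).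
by rewrite -P_val (horner0_eq0 (q := base_a) (k := b)) // => z z0; rewrite P_val base_neq0.
Qed.

Lemma evmap_base_b a b : ev F.1.1.2 (a, b, 0, 0) = b * base_b.[a * b].
Proof.
have base_neq0 b' : b' != 0 -> ev F.1.1.2 (a, b', 0, 0) = b' * base_b.[a * b'].
  move=> b'0; have [t [t0 t2 <-]] := act_base_b a b'0.
  have [_ -> _ _] := evmap_act (a * b', 1, 0, 0) t0.
  by rewrite t2 horner_line_poly /line /ca /cb /cx /cy /= !(mulr0, mulr1, addr0, add0r).
have [->|/base_neq0 //] := eqVneq b 0; rewrite mul0r.
set P := line_poly F.1.1.2 (a, 0, 0, 0) (0, 1, 0, 0).
have P_val z : P.[z] = ev F.1.1.2 (a, z, 0, 0).
  by rewrite horner_line_poly /line /ca /cb /cx /cy /= !(mulr0, mulr1, addr0, add0r).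
rewrite -P_val (horner0_eq0 (q := base_b) (k := a)) // => z z0.
by rewrite P_val base_neq0 // (mulrC a z).
Qed.

Lemma evmap_base a b :
  evmap F (a, b, 0, 0) = (a * base_a.[a * b], b * base_b.[a * b], 0, 0).
Proof.
have [ex ey] := evmap_base_xy a b.
by rewrite /evmap /map4 /= evmap_base_a evmap_base_b ex ey.
Qed.

Lemma Dmap_act t p v : t != 0 -> Dmap F (act t p) (act t v) = act t (Dmap F p v).
Proof.
move=> t0; have scale e k : (forall q, ev e (act t q) = k * ev e q) ->
    dv e (act t p) (act t v) = k * dv e p v.
  by move=> e_act; apply: dv_scale => z; rewrite line_act e_act.
rewrite /Dmap /map4 [RHS]/act /ca /cb /cx /cy /=.
by congr (_, _, _, _); apply: scale => q; case: (evmap_act q t0).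
Qed.

Lemma Dmap_base_ab a b x y :
  dv F.1.1.1 (a, b, 0, 0) (0, 0, x, y) = 0 /\ dv F.1.1.2 (a, b, 0, 0) (0, 0, x, y) = 0.
Proof.
have N1 : (-1 : C) != 0 by rewrite oppr_eq0 oner_eq0.
have dirN e : dv e (a, b, 0, 0) (0, 0, - x, - y) = - dv e (a, b, 0, 0) (0, 0, x, y).
  by rewrite (pderivXY _ _ (- x)) (pderivXY _ _ x); ring.
have := Dmap_act (a, b, 0, 0) (0, 0, x, y) N1.
rewrite /Dmap /map4 /= !act_opp1 oppr0 !dirN => -[ea eb].
by split; apply: self_opp_eq0; rewrite -1?ea -1?eb opprK.
Qed.

End EquivariantMap.

Lemma det2_mul_inverse (R : comNzRingType) (a b g d m11 m12 m21 m22 : R) :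
  a * m11 + g * m12 = 1 -> a * m21 + g * m22 = 0 ->
  b * m11 + d * m12 = 0 -> b * m21 + d * m22 = 1 ->
  (a * d - b * g) * (m11 * m22 - m12 * m21) = 1.
Proof.
move=> e11 e21 e12 e22.
transitivity ((a * m11 + g * m12) * (b * m21 + d * m22)
              - (b * m11 + d * m12) * (a * m21 + g * m22)); first by ring.
by rewrite e11 e21 e12 e22 mul1r mul0r subr0.
Qed.

Section Inequivalence.
Variable C : numClosedFieldType.
Variables (F G : pexpr_map C) (c : C).
Hypotheses (FK : cancel (evmap F) (evmap G)) (GK : cancel (evmap G) (evmap F)).
Hypothesis F_equi : equivariant (evmap F).
Hypotheses (c_real : c^* = c) (c_neq0 : c != 0).
Hypothesis F_mu : forall p, evmap F (mu0 p) = mu c%:P (evmap F p).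
Implicit Types (S T x y : C) (p : pt C).

Let G_equi : equivariant (evmap G) := equivariant_inverse FK GK F_equi.
Let lam := (base_a F)`_0.
Let lam' := (base_b F)`_0.

Lemma base_a_const : base_a F = lam%:P /\ lam != 0.
Proof.
apply: (@mul_poly_eq1 _ _ (base_a G \Po (base_a F * ('X * base_b F)))).
apply: eq_poly_horner => T; have := congr1 (fun r => r.1.1.1) (FK (1, T, 0, 0)).
rewrite !(evmap_base F_equi, evmap_base G_equi) /= !mul1r hornerC => <-.
by rewrite hornerM horner_comp !hornerM hornerX.
Qed.

Lemma base_b_const : base_b F = lam'%:P.
Proof.
suff /mul_poly_eq1 [] : base_b F * (base_b G \Po (base_a F * ('X * base_b F))) = 1 by [].
apply: eq_poly_neq0 => T T0; have := congr1 (fun r => r.1.1.2) (FK (1, T, 0, 0)).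
rewrite !(evmap_base F_equi, evmap_base G_equi) /= !mul1r hornerC => E.
apply: (mulfI T0); rewrite mulr1 -[in RHS]E hornerM horner_comp !hornerM hornerX.
exact: mulrA.
Qed.

Lemma evmap_base_const a b : evmap F (a, b, 0, 0) = (lam * a, lam' * b, 0, 0).
Proof.
by rewrite (evmap_base F_equi) (proj1 base_a_const) base_b_const !hornerC (mulrC a) (mulrC b).
Qed.

Let alpha := dv_poly F.1.2 (1, 'X, 0, 0) (0, 0, 1, 0).
Let beta := dv_poly F.1.2 (1, 'X, 0, 0) (0, 0, 0, 1).
Let gamma := dv_poly F.2 (1, 'X, 0, 0) (0, 0, 1, 0).
Let delta := dv_poly F.2 (1, 'X, 0, 0) (0, 0, 0, 1).

Lemma Dmap_base T x y : Dmap F (1, T, 0, 0) (0, 0, x, y) =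
  (0, 0, x * alpha.[T] + y * beta.[T], x * gamma.[T] + y * delta.[T]).
Proof.
have [da db] := Dmap_base_ab F_equi 1 T x y.
by rewrite /Dmap /map4 /= da db !(pderivXY _ _ x) !horner_dv_poly /map4 /= !hornerE.
Qed.

Lemma jacobian_det_const :
  let d := alpha * delta - beta * gamma in d = (d`_0)%:P /\ d`_0 != 0.
Proof.
pose m e v := dv_poly e (lam%:P, lam'%:P * 'X, 0, 0) v.
apply: (@mul_poly_eq1 _ _ (m G.1.2 (0, 0, 1, 0) * m G.2 (0, 0, 0, 1)
                         - m G.1.2 (0, 0, 0, 1) * m G.2 (0, 0, 1, 0))).
apply: eq_poly_horner => T.
have chain x y : dv G.1.2 (lam, lam' * T, 0, 0) (0, 0, x * alpha.[T] + y * beta.[T],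
                   x * gamma.[T] + y * delta.[T]) = x /\
                 dv G.2 (lam, lam' * T, 0, 0) (0, 0, x * alpha.[T] + y * beta.[T],
                   x * gamma.[T] + y * delta.[T]) = y.
  have inv_x q : ev G.1.2 (evmap F q) = ev EX q := congr1 (fun r => r.1.2) (FK q).
  have inv_y q : ev G.2 (evmap F q) = ev EY q := congr1 (fun r => r.2) (FK q).
  have := dv_comp (1, T, 0, 0) (0, 0, x, y) inv_x.
  have := dv_comp (1, T, 0, 0) (0, 0, x, y) inv_y.
  by rewrite evmap_base_const Dmap_base mulr1 => -> ->.
have [e11 e21] := chain 1 0; have [e12 e22] := chain 0 1.
rewrite !(pderivXY _ _ (_ * alpha.[T] + _)) !(mul1r, mul0r, addr0, add0r) in e11 e21 e12 e22.
rewrite !horner_dv_poly /map4 /= !hornerE in e11 e21 e12 e22.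
rewrite /m !hornerE !horner_dv_poly /map4 /= !hornerE.
exact: det2_mul_inverse e11 e21 e12 e22.
Qed.

Let alpha' := dv_poly F.1.2 ('X, 1, 0, 0) (0, 0, 1, 0).
Let gamma' := dv_poly F.2 ('X, 1, 0, 0) (0, 0, 1, 0).

Lemma jacobian_swap : alpha = alpha' /\ gamma = 'X^3 * gamma'.
Proof.
suff swap T : T != 0 -> alpha.[T] = alpha'.[T] /\ gamma.[T] = T ^+ 3 * gamma'.[T].
  by split; apply: eq_poly_neq0 => T /swap [// g_eq]; rewrite hornerM hornerXn.
move=> T0; have [t [t0 t2 actT]] := act_base_a 1 T0; rewrite mulr1 in actT.
have act_dir : act t (0, 0, 1, 0) = (0, 0, t ^+ 3, 0).
  by rewrite /act /ca /cb /cx /cy /= !mulr0 mulr1.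
have := Dmap_act F_equi (1, T, 0, 0) (0, 0, 1, 0) t0.
rewrite actT act_dir Dmap_base /Dmap /map4 /act /ca /cb /cx /cy /=.
rewrite !(pderivXY _ _ (t ^+ 3)) !horner_dv_poly /map4 /= !hornerE.
case=> _ _ /(mulfI (expf_neq0 3 t0)) -> ey; split=> //.
apply: (mulfI (invr_neq0 (expf_neq0 3 t0))); rewrite -ey -t2.
by field.
Qed.

Lemma lam'_conj : lam'^* = lam.
Proof.
have fix1 : mu0 (1, 1, 0, 0) = (1, 1, 0, 0) :> pt C.
  by rewrite /mu0 /ca /cb /cx /cy /= rmorph1 rmorph0.
have := F_mu (1, 1, 0, 0); rewrite fix1 evmap_base_const.
by rewrite /mu /phi /mu0 /ca /cb /cx /cy /= !mulr1 => -[-> *].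
Qed.

Let r := c ^+ 2 * lam * lam^*.
Let L T e := conjp (line_poly e (1, T, 0, 0) (0, 0, 0, 1)).

Lemma L_horner0 T :
  [/\ (L T F.1.1.1).[0] = lam^*, (L T F.1.1.2).[0] = lam * T^*,
      (L T F.1.2)`_0 = 0 & (L T F.2)`_0 = 0].
Proof.
have L_0 e : (L T e).[0] = (ev e (1, T, 0, 0))^*.
  by have [-> _ _] := conj_line_poly e (1, T, 0, 0) (0, 0, 0, 1).
have := evmap_base_const 1 T; rewrite mulr1 => -[ea eb ex ey].
by rewrite -!horner_coef0 !L_0 ea eb ex ey rmorph0 rmorphM /= lam'_conj.
Qed.

Lemma L_coef1 T : (L T F.1.2)`_1 = (beta.[T])^* /\ (L T F.2)`_1 = (delta.[T])^*.
Proof.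
have L_1 e : (L T e)`_1 = (dv e (1, T, 0, 0) (0, 0, 0, 1))^*.
  by have [_ -> _] := conj_line_poly e (1, T, 0, 0) (0, 0, 0, 1).
by rewrite !L_1 !horner_dv_poly /map4 /= !hornerE.
Qed.

(* At real parameters, mu0 maps the y-line through (1, conj S) onto the x-line
   through (S, 1), so [F_mu] computes F on the latter from its values on the former. *)
Lemma evmap_x_line S n : evmap F (line (S, 1, 0, 0) (0, 0, 1, 0) n%:R) =
  phi c%:P ((L S^* F.1.1.2).[n%:R], (L S^* F.1.1.1).[n%:R],
            (L S^* F.2).[n%:R], (L S^* F.1.2).[n%:R]).
Proof.
have -> : line (S, 1, 0, 0) (0, 0, 1, 0) n%:R = mu0 (line (1, S^*, 0, 0) (0, 0, 0, 1) n%:R).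
  rewrite /line /mu0 /ca /cb /cx /cy /= !(mulr0, mulr1, addr0, add0r) rmorph1.
  by rewrite conjCK rmorph_nat rmorph0.
have L_n e : (L S^* e).[n%:R] = (ev e (line (1, S^*, 0, 0) (0, 0, 0, 1) n%:R))^*.
  by have [_ _ ->] := conj_line_poly e (1, S^*, 0, 0) (0, 0, 0, 1).
by rewrite F_mu /mu !L_n.
Qed.

Lemma jacobian_mu S : let T := S^* in
  alpha'.[S] = (1 - r * S) * (delta.[T])^* + c ^+ 3 * lam ^+ 3 * S ^+ 3 * (beta.[T])^* /\
  gamma'.[S] = - (c ^+ 3 * lam^* ^+ 3) * (delta.[T])^*
               + (1 + r * S + r ^+ 2 * S ^+ 2) * (beta.[T])^*.
Proof.
move=> T; have [La0 Lb0 Lx0 Ly0] := L_horner0 T; have [Lx1 Ly1] := L_coef1 T.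
rewrite conjCK in Lb0.
have at_S e : (dv_poly e ('X, 1, 0, 0) (0, 0, 1, 0)).[S] = dv e (S, 1, 0, 0) (0, 0, 1, 0).
  by rewrite horner_dv_poly /map4 /= !hornerE.
split; rewrite at_S.
- rewrite (dv_natr (P := (1 - L T F.1.1.2 * L T F.1.1.1 * (c ^+ 2)%:P) * L T F.2
                         + L T F.1.1.2 ^+ 3 * (c ^+ 3)%:P * L T F.1.2)); last first.
    move=> n; have /= -> := congr1 (fun r => r.1.2) (evmap_x_line S n.+1).
    by rewrite /phi /= hornerC /nW !hornerE.
  rewrite coefD !coef1_mul // -!horner_coef0.
  by rewrite !(hornerD, hornerN, hornerM, horner_exp, hornerC) La0 Lb0 Lx1 Ly1 /r; ring.
- rewrite (dv_natr (P := - (L T F.1.1.1 ^+ 3 * (c ^+ 3)%:P) * L T F.2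
      + (1 + L T F.1.1.2 * L T F.1.1.1 * (c ^+ 2)%:P
         + (L T F.1.1.2 * L T F.1.1.1 * (c ^+ 2)%:P) ^+ 2) * L T F.1.2)); last first.
    move=> n; have /= -> := congr1 (fun r => r.2) (evmap_x_line S n.+1).
    rewrite /phi /ca /cb /cx /cy /= hornerC /nW !big_ord_recr big_ord0 /=.
    by rewrite !(hornerD, hornerN, hornerM, horner_exp, hornerC); ring.
  rewrite coefD !coef1_mul // -!horner_coef0.
  by rewrite !(hornerD, hornerN, hornerM, horner_exp, hornerC) La0 Lb0 Lx1 Ly1 /r; ring.
Qed.

Lemma norm_identity : let d := (alpha * delta - beta * gamma)`_0 in
  (1 - r%:P * 'X) * d%:P = alpha' * conjp alpha' - 'X^3 * (beta * conjp beta).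
Proof.
move=> d; have [dE _] := jacobian_det_const; have [a_sw g_sw] := jacobian_swap.
apply: eq_poly_horner => S; set T := S^*.
have [aS gS] := jacobian_mu S; have [aT _] := jacobian_mu T.
rewrite -/d in dE; have S_conj : S = T^* by rewrite conjCK.
have conjpS (q : {poly C}) : (conjp q).[S] = (q.[T])^* by rewrite /conjp {1}S_conj horner_map.
rewrite -dE a_sw g_sw !(hornerD, hornerN, hornerM, horner_exp, hornerC, hornerX) !conjpS.
rewrite aS gS aT.
rewrite -S_conj !(rmorphD, rmorphB, rmorphM, rmorphXn, rmorph1, rmorphN) /= !conjCK c_real.
by rewrite /T /r; ring.
Qed.

Lemma conjugating_map_absurd : False.
Proof.
have [_ d0] := jacobian_det_const; have [_ lam0] := base_a_const.
have r0 : r != 0 by rewrite !mulf_neq0 ?expf_neq0 ?conjC_eq0.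
move: (size_norm_poly_sub_X3 alpha' beta); rewrite -norm_identity mulrC size_Cmul //.
rewrite addrC size_polyDl ?size_polyN ?size_Cmul ?size_polyX ?size_polyC ?oner_neq0 //.
Qed.

End Inequivalence.

Section Equivalences.
Variable C : numClosedFieldType.

Lemma equiv_forms_sym (mu1 mu2 : pt C -> pt C) : equiv_forms mu1 mu2 -> equiv_forms mu2 mu1.
Proof.
move=> [psi [psi' [[r r'] psiK psi'K psi_eq mu_eq]]]; exists psi', psi; split=> //.
- exact: equivariant_inverse psi_eq.
- by move=> p; rewrite mu_eq !psiK.
Qed.

Lemma equiv_forms_trans (mu1 mu2 mu3 : pt C -> pt C) :
  equiv_forms mu1 mu2 -> equiv_forms mu2 mu3 -> equiv_forms mu1 mu3.
Proof.
move=> [f [f' [[r r'] fK f'K f_eq mu12]]] [g [g' [[s s'] gK g'K g_eq mu23]]].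
exists (fun p => g (f p)), (fun p => f' (g' p)); split.
- by split; apply: regular_comp.
- by move=> p; rewrite gK fK.
- by move=> p; rewrite f'K g'K.
- by move=> t t0 p; rewrite f_eq // g_eq.
- by move=> p; rewrite mu23 mu12.
Qed.

Lemma eq_equiv_forms (mu1 mu2 mu3 : pt C -> pt C) : equiv_forms mu1 mu2 -> mu2 =1 mu3 ->
  equiv_forms mu1 mu3.
Proof.
by move=> [psi [psi' [r psiK psi'K psi_eq mu_eq]]] eq_mu; exists psi, psi'; split=> // p;
  rewrite -eq_mu.
Qed.

Lemma not_equiv_mu0_mu_const (c : C) : c^* = c -> c != 0 -> ~ equiv_forms (@mu0 C) (mu c%:P).
Proof.
move=> c_real c0 [psi [psi' [[/regular_evmap [F ->] /regular_evmap [G ->]] FK GK F_eq mu_eq]]].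
apply: (conjugating_map_absurd FK GK F_eq c_real c0) => p.
by rewrite mu_eq FK.
Qed.

End Equivalences.

Section RealPoly.
Variable C : numClosedFieldType.
Implicit Types h : {poly C}.

Lemma horner_real_conj h z : real_poly h -> (h.[z])^* = h.[z^*].
Proof.
move=> h_real; rewrite -horner_map; congr (_.[_]); apply/polyP => i.
by rewrite coef_map /= conj_Creal // (polyOverP h_real).
Qed.

Lemma real_poly_split h :
  real_poly h -> exists2 k, real_poly k & h = (h.[0])%:P + 'X * k.
Proof.
move=> h_real; exists (drop_poly 1 h).
  by apply/polyOverP => i; rewrite coef_drop_poly (polyOverP h_real).
rewrite -{1}(poly_take_drop 1 h) mulrC expr1 horner_coef0; congr (_ + _).
by apply/polyP => i; rewrite coef_take_poly coefC; case: i.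
Qed.

End RealPoly.

Ltac solve_polyfun := repeat first
  [ apply: PF_add | apply: polyfunB | apply: PF_mul | apply: polyfunN | apply: polyfunX
  | apply: polyfun_horner_ab | apply: PF_const | apply: PF_a | apply: PF_b
  | apply: PF_x | apply: PF_y ].

(* [shear h k] fixes (a, b) and acts on (x, y) by a matrix of determinant 1;
   [shear_inv h k] uses its adjugate. *)
Section Shear.
Variable C : numClosedFieldType.
Variables h k : {poly C}.

Definition shear (p : pt C) : pt C :=
  let a := ca p in let b := cb p in let T := a * b in
  let s := h.[T] in let u := k.[T] in let s' := s + T * u in
  (a, b, (1 - T ^+ 2 * s * u) * cx p + a ^+ 3 * u * cy p,
         b ^+ 3 * u * (1 - T * s' * s) * cx p + (1 + T ^+ 2 * s' * u) * cy p).

Definition shear_inv (p : pt C) : pt C :=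
  let a := ca p in let b := cb p in let T := a * b in
  let s := h.[T] in let u := k.[T] in let s' := s + T * u in
  (a, b, (1 + T ^+ 2 * s' * u) * cx p - a ^+ 3 * u * cy p,
         - (b ^+ 3 * u * (1 - T * s' * s)) * cx p + (1 - T ^+ 2 * s * u) * cy p).

Lemma regular_shear : regular_map shear.
Proof. by split; rewrite /shear /ca /cb /cx /cy /=; solve_polyfun. Qed.

Lemma regular_shear_inv : regular_map shear_inv.
Proof. by split; rewrite /shear_inv /ca /cb /cx /cy /=; solve_polyfun. Qed.

Lemma shearK : cancel shear shear_inv.
Proof.
move=> [[[a b] x] y]; rewrite /shear /shear_inv /ca /cb /cx /cy /=.
by congr (_, _, _, _); ring.
Qed.

Lemma shear_invK : cancel shear_inv shear.
Proof.
move=> [[[a b] x] y]; rewrite /shear /shear_inv /ca /cb /cx /cy /=.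
by congr (_, _, _, _); ring.
Qed.

Lemma shear_equivariant : equivariant shear.
Proof.
move=> t t0 [[[a b] x] y]; rewrite /shear /act /ca /cb /cx /cy /=.
have -> : t ^+ 2 * a * (t ^- 2 * b) = a * b by field.
by congr (_, _, _, _); field.
Qed.

Hypotheses (h_real : real_poly h) (k_real : real_poly k).

Lemma shear_mu p : mu (h + 'X * k) (shear p) = shear (mu h p).
Proof.
case: p => [[[a b] x] y]; rewrite /mu /mu0 /phi /shear /ca /cb /cx /cy /= /nW.
rewrite !big_ord_recr !big_ord0 /= !(hornerD, hornerM, hornerX).
rewrite !(rmorphD, rmorphB, rmorphN, rmorphM, rmorphXn, rmorph1) /= !horner_real_conj //.
by rewrite !rmorphM /= (mulrC a^* b^*); congr (_, _, _, _); ring.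
Qed.

End Shear.

Lemma equiv_mu_shift (C : numClosedFieldType) (h k : {poly C}) :
  real_poly h -> real_poly k -> equiv_forms (mu h) (mu (h + 'X * k)).
Proof.
move=> h_real k_real; exists (shear h k), (shear_inv h k); split.
- by split; [exact: regular_shear | exact: regular_shear_inv].
- exact: shearK.
- exact: shear_invK.
- exact: shear_equivariant.
- by move=> p; rewrite -shear_mu // shear_invK.
Qed.

Definition scale_ab (C : numClosedFieldType) (rho : C) (p : pt C) : pt C :=
  (rho * ca p, rho * cb p, cx p, cy p).

Lemma equiv_mu_scale (C : numClosedFieldType) (c rho : C) :
  rho^* = rho -> rho != 0 -> equiv_forms (mu c%:P) (mu (c / rho)%:P).
Proof.
move=> rho_real rho0; exists (scale_ab rho), (scale_ab rho^-1); split.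
- by split; split; rewrite /scale_ab /ca /cb /cx /cy /=; solve_polyfun.
- by move=> [[[a b] x] y]; rewrite /scale_ab /ca /cb /cx /cy /= !mulrA mulVf ?mul1r.
- by move=> [[[a b] x] y]; rewrite /scale_ab /ca /cb /cx /cy /= !mulrA mulfV ?mul1r.
- move=> t t0 [[[a b] x] y]; rewrite /scale_ab /act /ca /cb /cx /cy /=.
  by rewrite (mulrCA rho (t ^+ 2)) (mulrCA rho (t ^- 2)).
- move=> [[[a b] x] y]; rewrite /scale_ab /mu /mu0 /phi /ca /cb /cx /cy /= /nW !hornerC.
  rewrite !big_ord_recr !big_ord0 /= !rmorphM /= fmorphV /= rho_real.
  by congr (_, _, _, _); field.
Qed.

Lemma mu_polyC0 (C : numClosedFieldType) (p : pt C) : mu 0%:P p = mu0 p.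
Proof.
case: p => [[[a b] x] y]; rewrite /mu /mu0 /phi /ca /cb /cx /cy /= /nW hornerC.
by rewrite !big_ord_recr !big_ord0 /=; congr (_, _, _, _); ring.
Qed.

Lemma equiv_mu_const (C : numClosedFieldType) (h : {poly C}) :
  real_poly h -> equiv_forms (mu h) (mu (h.[0])%:P).
Proof.
move=> h_real; have [k k_real hE] := real_poly_split h_real.
have h0_real : real_poly (h.[0])%:P.
  by rewrite /real_poly polyOverC horner_coef0 (polyOverP h_real).
by apply: equiv_forms_sym; rewrite {2}hE; apply: equiv_mu_shift.
Qed.

Theorem mainTheorem2 (C : numClosedFieldType) :
  [/\ forall h : {poly C}, real_poly h ->
        (equiv_forms (@mu0 C) (mu h) <-> h.[0] = 0),
      ~ equiv_forms (@mu0 C) (mu 1) &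
      forall h g : {poly C}, real_poly h -> real_poly g ->
        h.[0] != 0 -> g.[0] != 0 -> equiv_forms (mu h) (mu g)].
Proof.
have real0 (h : {poly C}) : real_poly h -> (h.[0])^* = h.[0].
  by move=> h_real; rewrite horner_real_conj // rmorph0.
split.
- move=> h h_real; split=> [equiv_h|h0].
  + have [//|h0] := eqVneq h.[0] 0; case: (not_equiv_mu0_mu_const (real0 h h_real) h0).
    exact: equiv_forms_trans equiv_h (equiv_mu_const h_real).
  + apply: equiv_forms_sym; apply: (eq_equiv_forms (equiv_mu_const h_real)) => p.
    by rewrite h0 mu_polyC0.
- by apply: not_equiv_mu0_mu_const; rewrite ?conjC1 ?oner_neq0.
- move=> h g h_real g_real h0 g0; pose rho := h.[0] / g.[0].
  have rho_real : rho^* = rho by rewrite fmorph_div /= !real0.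
  have rho0 : rho != 0 by rewrite mulf_neq0 ?invr_eq0.
  apply: equiv_forms_trans (equiv_mu_const h_real) _.
  apply: equiv_forms_trans (equiv_mu_scale (h.[0]) rho_real rho0) _.
  rewrite /rho invfM invrK mulrA mulfV // mul1r.
  exact: equiv_forms_sym (equiv_mu_const g_real).
Qed.
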